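(* Let $\mathcal{S}$ be a state space, $\mathcal{A}$ a finite action space, $\rho$ a distribution on $\mathcal{S}$, $\pi_{\mathrm{ref}}$ a policy with full support, $\beta>0$, $R>0$, and $r^*:\mathcal{S}\times\mathcal{A}\to[0,R]$. Let $$\Pi_{\le R/\beta}:=\Big\{\pi:\mathcal{S}\to\Delta(\mathcal{A})\ \Big|\ \max_{s,a}\Big|\log\frac{\pi(a|s)}{\pi_{\mathrm{ref}}(a|s)}\Big|\le\frac R\beta\Big\}.$$ Then for any policy $\pi\in\Pi_{\le R/\beta}$, $$\mathrm{Cov}^{\pi^*_{r^*}|\pi}\le1+\kappa\big(e^{2R/\beta}\big)\cdot\frac{J_\beta(\pi^*_{r^*})-J_\beta(\pi)}{\beta},$$ where $\kappa(x):=\frac{(x-1)^2}{x-1-\log x}$ (and $\kappa(x)=O(x)$).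
   Context: $\pi^*_{r^*}(a|s)\propto\pi_{\mathrm{ref}}(a|s)e^{r^*(s,a)/\beta}$; $J_\beta(\pi):=\mathbb{E}_{s\sim\rho}[\mathbb{E}_{a\sim\pi(\cdot|s)}r^*(s,a)-\beta\mathrm{KL}(\pi(\cdot|s)\|\pi_{\mathrm{ref}}(\cdot|s))]$; $\mathrm{Cov}^{\tilde\pi|\pi}:=\mathbb{E}_{s\sim\rho,a\sim\tilde\pi(\cdot|s)}[\tilde\pi(a|s)/\pi(a|s)]$. *)

From HB Require Import structures.
From mathcomp Require Import all_boot all_order all_algebra.
From mathcomp Require Import all_classical all_reals all_analysis.

Set Implicit Arguments.
Unset Strict Implicit.
Unset Printing Implicit Defensive.

Import Order.TTheory GRing.Theory Num.Theory.
Local Open Scope ring_scope.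

Section Defs.
Context {R : realType} {S : Type} {A : finType}.

Definition is_policy (pi : S -> A -> R) : Prop :=
  forall s, (forall a, 0 <= pi s a) /\ \sum_(a : A) pi s a = 1.

(* KL(p || q) = sum_a p(a) log (p(a)/q(a)), with 0 log 0 = 0
   (automatic since ln 0 = 0 in mathcomp-analysis). *)
Definition KL (p q : A -> R) : R := \sum_(a : A) p a * ln (p a / q a).

Definition pistar (piref : S -> A -> R) (r : S -> A -> R) (beta : R) : S -> A -> R :=
  fun s a => piref s a * expR (r s a / beta) /
             \sum_(b : A) piref s b * expR (r s b / beta).

(* Pi_{<= R/beta}: policies with |log(pi/pi_ref)| <= R/beta everywhere.
   Since log 0 = -oo, the bound forces pi(a|s) > 0; we state it explicitly
   because mathcomp's ln is total with ln 0 = 0. *)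
Definition Pi_le (piref : S -> A -> R) (Rb beta : R) (pi : S -> A -> R) : Prop :=
  is_policy pi /\
  forall s a, 0 < pi s a /\ `| ln (pi s a / piref s a) | <= Rb / beta.

Definition kappa (x : R) : R := (x - 1) ^+ 2 / (x - 1 - ln x).

End Defs.

Section Integrals.
Local Open Scope ereal_scope.
Context {d : measure_display} {S : measurableType d} {R : realType} {A : finType}.

Definition Jbeta (rho : probability S R) (piref r : S -> A -> R) (beta : R)
    (pi : S -> A -> R) : \bar R :=
  \int[rho]_s ((\sum_(a : A) pi s a * r s a - beta * KL (pi s) (piref s))%R)%:E.

Definition Cov (rho : probability S R) (pt pi : S -> A -> R) : \bar R :=
  \int[rho]_s ((\sum_(a : A) pt s a * (pt s a / pi s a))%R)%:E.

End Integrals.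

(* Fix a state and write p = pi*(.|s), q = pi(.|s) and x_a = p_a / q_a.  Since p is a Gibbs
   distribution, the per-state regularized objective satisfies J(p) - J(q) = beta KL(q || p);
   moreover sum_a p_a^2 / q_a = 1 + sum_a q_a (x_a - 1)^2 and KL(q || p) = sum_a q_a
   (x_a - 1 - ln x_a).  The log-ratio bounds on r* and pi give x_a <= M := e^(2R/beta), and on
   (0, M] one has (x - 1)^2 <= kappa(M) (x - 1 - ln x), which is proved by a sign analysis of
   the derivative.  This gives the inequality state by state; all per-state quantities are
   bounded, hence integrable, and integrating over rho concludes. *)

From HB Require Import structures.
From mathcomp Require Import all_boot all_order all_algebra.
From mathcomp Require Import all_classical all_reals all_analysis.
From mathcomp Require Import ring lra measurable_realfun.
Import Order.TTheory GRing.Theory Num.Theory.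

Local Open Scope ring_scope.

Section derive_sign.
Context {R : realType}.

Lemma derive_ge0_le [f df : R -> R] [u v : R] : u <= v ->
  (forall t, t \in `[u, v] -> is_derive t 1 f (df t)) ->
  (forall t, t \in `[u, v] -> 0 <= df t) -> f u <= f v.
Proof.
move=> uv fd dfge0.
have fd' t : t \in `]u, v[ -> is_derive t 1 f (df t).
  by move=> tuv; apply: fd; apply: subset_itv_oo_cc.
have [c cuv fvu] := MVT_segment uv fd'
  (derivable_within_continuous (fun t tuv => @ex_derive _ _ _ _ _ _ _ (fd t tuv))).
by rewrite -subr_ge0 fvu mulr_ge0 ?dfge0 // subr_ge0.
Qed.

Lemma derive_le0_ge [f df : R -> R] [u v : R] : u <= v ->
  (forall t, t \in `[u, v] -> is_derive t 1 f (df t)) ->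
  (forall t, t \in `[u, v] -> df t <= 0) -> f v <= f u.
Proof.
move=> uv fd dfle0; rewrite -lerN2.
apply: (@derive_ge0_le (- f) (fun t => - df t)) => // t tuv.
- exact/is_deriveN/fd.
- by rewrite oppr_ge0 dfle0.
Qed.

End derive_sign.

Section kappa_bound.
Context {R : realType}.

Lemma subr1_ln_gt0 (x : R) : 0 < x -> x != 1 -> 0 < x - 1 - ln x.
Proof.
move=> x0 x1; have := @expR_gt1Dx R (ln x).
by rewrite lnK ?posrE // ln_eq0 // x1 subr_gt0 addrC ltrBrDr; apply.
Qed.

Definition ln_quad (a c t : R) := a * (t - ln t) - c * (t - 1) ^+ 2.

Lemma is_derive_ln_quad (a c t : R) : 0 < t ->
  is_derive t 1 (ln_quad a c) ((t - 1) * (a / t - 2 * c)).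
Proof.
move=> t0; have ln_t := is_derive1_ln t0.
have -> : ln_quad a c =
    a \*: ((id : R -> R) - @ln R) - c \*: (((id : R -> R) - cst 1) ^+ 2).
  by apply/funext => x; rewrite /ln_quad /= !fctE.
apply: is_derive_eq; rewrite /= !fctE expr1.
change (a * (1 - t^-1) - c * (2 * (t - 1) * (1 - 0)) = (t - 1) * (a / t - 2 * c)).
by field; rewrite gt_eqF.
Qed.

Lemma twice_subr1_ln_le_sqr (x : R) : 1 <= x -> 2 * (x - 1 - ln x) <= (x - 1) ^+ 2.
Proof.
move=> x1.
have : ln_quad 2 1 x <= ln_quad 2 1 1.
  apply: (@derive_le0_ge _ _ (fun t => (t - 1) * (2 / t - 2 * 1))) => // t.
  - rewrite in_itv /= => /andP[t1 _].
    by apply: is_derive_ln_quad; exact: lt_le_trans t1.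
  - rewrite in_itv /= => /andP[t1 _]; apply: mulr_ge0_le0; first by rewrite subr_ge0.
    by rewrite mulr1 subr_le0 ler_pdivrMr ?ler_pMr ?(lt_le_trans ltr01 t1).
rewrite /ln_quad ln1; lra.
Qed.

Section kappa_M.
Context {M : R}.
Hypothesis M_gt1 : 1 < M.
Let a := (M - 1) ^+ 2.
Let c := M - 1 - ln M.

Let c_gt0 : 0 < c.
Proof. by apply: subr1_ln_gt0; [exact: lt_trans M_gt1 | rewrite gt_eqF]. Qed.

Let twice_c_le_a : 2 * c <= a.
Proof. exact/twice_subr1_ln_le_sqr/ltW. Qed.

(* [ln_quad a c] takes the value [a] at both 1 and M, and its derivative
   [(t - 1) (a / t - 2 c)] has the sign of [t - 1] as long as [t <= a / (2 c)], where
   [1 <= a / (2 c)]: it decreases on (0, 1] and increases then decreases on [1, M], so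
   its minimum on (0, M] is [a]. *)
Let ln_quad_ge [x : R] : 0 < x -> x <= M -> a <= ln_quad a c x.
Proof.
move=> x0 xM.
have ln_quad1 : ln_quad a c 1 = a by rewrite /ln_quad ln1; ring.
have ln_quadM : ln_quad a c M = a by rewrite /ln_quad /a /c; ring.
pose dF t := (t - 1) * (a / t - 2 * c).
have is_derive_dF (u v : R) : 0 < u -> forall t : R, t \in `[u, v] ->
    is_derive t 1 (ln_quad a c) (dF t).
  move=> u0 t; rewrite in_itv /= => /andP[ut _].
  by apply: is_derive_ln_quad; exact: lt_le_trans ut.
have [x_le1 | x_gt1] := lerP x 1.
  rewrite -[X in X <= _]ln_quad1; apply: (derive_le0_ge x_le1 (is_derive_dF _ _ x0)) => t.
  rewrite in_itv /= => /andP[xt t1]; have t0 := lt_le_trans x0 xt.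
  rewrite mulr_le0_ge0 ?subr_le0 ?subr_ge0 // (le_trans twice_c_le_a) //.
  by rewrite ler_pdivlMr // ler_piMr // sqr_ge0.
have [x_small | x_large] := lerP (x * (2 * c)) a.
  rewrite -[X in X <= _]ln_quad1.
  apply: (derive_ge0_le (ltW x_gt1) (is_derive_dF _ _ ltr01)) => t.
  rewrite in_itv /= => /andP[t1 tx]; have t0 := lt_le_trans ltr01 t1.
  rewrite mulr_ge0 ?subr_ge0 // ler_pdivlMr // (le_trans _ x_small) //.
  by rewrite mulrC ler_wpM2r ?mulr_ge0 // ltW.
rewrite -[X in X <= _]ln_quadM; apply: (derive_le0_ge xM (is_derive_dF _ _ x0)) => t.
rewrite in_itv /= => /andP[xt tM]; have t0 := lt_le_trans x0 xt.
rewrite mulr_ge0_le0 ?subr_ge0 ?(le_trans (ltW x_gt1)) // subr_le0 ler_pdivrMr //.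
by rewrite (le_trans (ltW x_large)) // mulrC ler_wpM2l ?mulr_ge0 // ltW.
Qed.

Lemma sqr_subr1_le_kappa [x : R] : 0 < x -> x <= M ->
  (x - 1) ^+ 2 <= kappa M * (x - 1 - ln x).
Proof.
move=> x0 xM; have := ln_quad_ge x0 xM.
rewrite /kappa /ln_quad -/a -/c => h.
rewrite mulrAC ler_pdivlMr //; lra.
Qed.

End kappa_M.
End kappa_bound.

Section finite_distributions.
Context {R : realType} {A : finType}.

Definition coverage (p q : A -> R) : R := \sum_a p a * (p a / q a).

Lemma norm_expectation_le (q f : A -> R) (B : R) :
  (forall a, 0 <= q a) -> \sum_a q a = 1 -> (forall a, `|f a| <= B) ->
  `|\sum_a q a * f a| <= B.
Proof.
move=> q0 q1 fB; apply: le_trans (ler_norm_sum _ _ _) _.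
rewrite -[X in _ <= X]mul1r -q1 mulr_suml; apply: ler_sum => a _.
by rewrite normrM ger0_norm // ler_wpM2l.
Qed.

Lemma coverage_le_kappa_KL (p q : A -> R) (M : R) : 1 < M ->
  (forall a, 0 < p a) -> (forall a, 0 < q a) ->
  \sum_a p a = 1 -> \sum_a q a = 1 -> (forall a, p a / q a <= M) ->
  coverage p q <= 1 + kappa M * KL q p.
Proof.
move=> M1 p0 q0 p1 q1 pqM.
have -> : 1 + kappa M * KL q p =
    \sum_a (q a + kappa M * (q a * ln (q a / p a)) + (kappa M + 2) * (p a - q a)).
  by rewrite !big_split /= -!mulr_sumr sumrB p1 q1 subrr mulr0 addr0.
apply: ler_sum => a _.
have x0 : 0 < p a / q a by rewrite divr_gt0.
have := sqr_subr1_le_kappa M1 x0 (pqM a).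
have -> : ln (q a / p a) = - ln (p a / q a) by rewrite -lnV ?posrE // invf_div.
set x := p a / q a => kappa_x.
have -> : p a = q a * x by rewrite mulrC divfK // gt_eqF.
rewrite -subr_ge0.
have -> : q a + kappa M * (q a * - ln x) + (kappa M + 2) * (q a * x - q a) - q a * x * x
    = q a * (kappa M * (x - 1 - ln x) - (x - 1) ^+ 2) by ring.
by rewrite mulr_ge0 ?subr_ge0 // ltW.
Qed.
End finite_distributions.

Section gibbs.
Context {R : realType} {A : finType}.

Definition gibbs (ref r : A -> R) (b : R) : A -> R :=
  fun a => ref a * expR (r a / b) / \sum_c ref c * expR (r c / b).

(* The integrand of [Jbeta]: [Jbeta rho ref r b pi] is the integral of
   [reg_reward (ref s) (r s) b (pi s)]. *)
Definition reg_reward (ref r : A -> R) (b : R) (q : A -> R) : R :=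
  \sum_a q a * r a - b * KL q ref.

Context {ref r : A -> R} {b : R}.
Hypothesis ref_gt0 : forall a, 0 < ref a.
Hypothesis sum_ref : \sum_a ref a = 1.
Hypothesis r_ge0 : forall a, 0 <= r a.
Hypothesis b_gt0 : 0 < b.

Let Z := \sum_c ref c * expR (r c / b).
Let p := gibbs ref r b.

Lemma partition_ge1 : 1 <= Z.
Proof.
rewrite -sum_ref; apply: ler_sum => a _.
by rewrite ler_pMr // -expR0 ler_expR divr_ge0 // ltW.
Qed.

Let Z_gt0 : 0 < Z. Proof. exact: lt_le_trans ltr01 partition_ge1. Qed.

Lemma gibbs_gt0 a : 0 < p a.
Proof. by rewrite !mulr_gt0 ?expR_gt0 ?invr_gt0. Qed.

Lemma sum_gibbs : \sum_a p a = 1.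
Proof. by rewrite -mulr_suml divff // gt_eqF. Qed.

Lemma ln_gibbs_ratio a : ln (p a / ref a) = r a / b - ln Z.
Proof.
have -> : p a / ref a = expR (r a / b) / Z.
  by rewrite /p /gibbs -/Z; field; rewrite !gt_eqF.
by rewrite ln_div ?posrE ?expR_gt0 // expRK.
Qed.

Lemma reg_reward_gibbs_KL q : (forall a, 0 <= q a) -> \sum_a q a = 1 ->
  reg_reward ref r b q = b * ln Z - b * KL q p.
Proof.
move=> q0 q1.
have KL_ref : KL q ref = KL q p + (\sum_a q a * r a) / b - ln Z.
  transitivity (\sum_a (q a * ln (q a / p a) + q a * (r a / b - ln Z))).
    apply: eq_bigr => a _.
    have [->|qa_neq0] := eqVneq (q a) 0; first by rewrite !mul0r addr0.
    have qa_gt0 : 0 < q a by rewrite lt_neqAle eq_sym qa_neq0 q0.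
    rewrite -mulrDr -ln_gibbs_ratio -lnM ?posrE ?divr_gt0 ?gibbs_gt0 ?mulr_gt0 ?expR_gt0 //.
    by congr (_ * ln _); field; rewrite !gt_eqF ?gibbs_gt0.
  rewrite big_split /= -/(KL q p) -addrA; congr (_ + _).
  under eq_bigr do rewrite mulrBr mulrA.
  by rewrite sumrB -mulr_suml -mulr_suml q1 mul1r.
rewrite /reg_reward KL_ref; field; exact: lt0r_neq0.
Qed.

Lemma reg_reward_gibbs : reg_reward ref r b p = b * ln Z.
Proof.
have KL_pp : KL p p = 0.
  by apply: big1 => a _; rewrite divff ?ln1 ?mulr0 // gt_eqF ?gibbs_gt0.
rewrite reg_reward_gibbs_KL ?sum_gibbs ?KL_pp ?mulr0 ?subr0 // => a.
exact/ltW/gibbs_gt0.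
Qed.

Lemma reg_reward_gibbs_sub q : (forall a, 0 <= q a) -> \sum_a q a = 1 ->
  reg_reward ref r b p - reg_reward ref r b q = b * KL q p.
Proof. by move=> q0 q1; rewrite reg_reward_gibbs reg_reward_gibbs_KL // subKr. Qed.

Context {Rb : R}.
Hypothesis r_le : forall a, r a <= Rb.

Lemma ln_partition_le : ln Z <= Rb / b.
Proof.
rewrite -ler_expR lnK ?posrE // -[X in _ <= X]mul1r -sum_ref mulr_suml.
apply: ler_sum => a _; apply: ler_wpM2l; first exact: ltW.
by rewrite ler_expR ler_pM2r ?invr_gt0.
Qed.

Lemma norm_reg_reward_gibbs_le : `|reg_reward ref r b p| <= Rb.
Proof.
rewrite reg_reward_gibbs ger0_norm; last by rewrite mulr_ge0 ?ln_ge0 ?partition_ge1 ?ltW.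
by rewrite -ler_pdivlMl // mulrC ln_partition_le.
Qed.

Lemma gibbs_ratio_le q : (forall a, 0 < q a) ->
  (forall a, `|ln (q a / ref a)| <= Rb / b) -> forall a, p a / q a <= expR (2 * Rb / b).
Proof.
move=> q0 q_ratio a.
have p_ref_gt0 : 0 < p a / ref a := divr_gt0 (gibbs_gt0 a) (ref_gt0 a).
have q_ref_gt0 : 0 < q a / ref a := divr_gt0 (q0 a) (ref_gt0 a).
have -> : p a / q a = (p a / ref a) / (q a / ref a).
  by field; rewrite !gt_eqF ?gibbs_gt0.
rewrite -[X in X <= _]lnK ?posrE ?(divr_gt0 p_ref_gt0 q_ref_gt0) //.
rewrite ler_expR ln_div ?posrE // ln_gibbs_ratio.
have ra_le : r a / b <= Rb / b by rewrite ler_pM2r ?invr_gt0.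
have lnZ_ge0 : 0 <= ln Z by rewrite ln_ge0 ?partition_ge1.
move: (q_ratio a); rewrite ler_norml => /andP[lo _]; lra.
Qed.

Lemma coverage_gibbs_le q : 0 < Rb -> (forall a, 0 < q a) -> \sum_a q a = 1 ->
  (forall a, `|ln (q a / ref a)| <= Rb / b) ->
  coverage p q <= 1 + kappa (expR (2 * Rb / b)) *
    ((reg_reward ref r b p - reg_reward ref r b q) * b^-1).
Proof.
move=> Rb_gt0 q0 q1 q_ratio.
rewrite reg_reward_gibbs_sub // => [|a]; last exact: ltW.
rewrite [b * _ * _]mulrAC mulfV ?gt_eqF // mul1r; apply: coverage_le_kappa_KL => //.
- by rewrite expR_gt1 !mulr_gt0 ?invr_gt0.
- exact: gibbs_gt0.
- exact: sum_gibbs.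
- exact: gibbs_ratio_le.
Qed.

Lemma norm_reg_reward_le q : (forall a, 0 <= q a) -> \sum_a q a = 1 ->
  (forall a, `|ln (q a / ref a)| <= Rb / b) -> `|reg_reward ref r b q| <= Rb + Rb.
Proof.
move=> q0 q1 q_ratio; apply: le_trans (ler_normB _ _) _; apply: lerD.
  by apply: norm_expectation_le => // a; rewrite ger0_norm.
rewrite normrM gtr0_norm // -ler_pdivlMl // mulrC.
exact: norm_expectation_le.
Qed.

End gibbs.

Section measurability.
Context {d : measure_display} {T : measurableType d} {R : realType} {A : finType}.

Lemma measurable_funV_gt0 (f : T -> R) : measurable_fun setT f ->
  (forall x, 0 < f x) -> measurable_fun setT (fun x => (f x)^-1).
Proof.
move=> mf f_gt0.
have -> : (fun x => (f x)^-1) = expR \o (fun x => - ln (f x)).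
  by apply/funext => x; rewrite /= expRN lnK ?posrE.
apply: measurableT_comp; first exact: measurable_expR.
by apply: measurableT_comp => //; apply: measurableT_comp => //; exact: measurable_ln.
Qed.

Context {ref r : T -> A -> R} {b : R}.
Hypothesis ref_gt0 : forall x a, 0 < ref x a.
Hypothesis mref : forall a, measurable_fun setT (ref ^~ a).
Hypothesis mr : forall a, measurable_fun setT (r ^~ a).

Lemma measurable_gibbs : (forall x, \sum_a ref x a = 1) -> (forall x a, 0 <= r x a) ->
  0 < b -> forall a, measurable_fun setT (fun x => gibbs (ref x) (r x) b a).
Proof.
move=> sum_ref r_ge0 b_gt0 a.
have mw c : measurable_fun setT (fun x => ref x c * expR (r x c / b)).
  apply: measurable_funM => //; apply: measurableT_comp; first exact: measurable_expR.
  exact: measurable_funM.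
apply: measurable_funM => //; apply: measurable_funV_gt0.
  exact: measurable_sum.
move=> x; apply: lt_le_trans ltr01 _; exact: partition_ge1.
Qed.

Lemma measurable_reg_reward (q : T -> A -> R) : (forall a, measurable_fun setT (q ^~ a)) ->
  measurable_fun setT (fun x => reg_reward (ref x) (r x) b (q x)).
Proof.
move=> mq; apply: measurable_funB.
  by apply: measurable_sum => a; exact: measurable_funM.
apply: measurable_funM => //; apply: measurable_sum => a.
apply: measurable_funM => //; apply: measurableT_comp; first exact: measurable_ln.
by apply: measurable_funM => //; exact: measurable_funV_gt0.
Qed.

End measurability.

Lemma measurable_coverage {d : measure_display} {T : measurableType d} {R : realType}
    {A : finType} (p q : T -> A -> R) :
  (forall a, measurable_fun setT (p ^~ a)) -> (forall a, measurable_fun setT (q ^~ a)) ->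
  (forall x a, 0 < q x a) -> measurable_fun setT (fun x => coverage (p x) (q x)).
Proof.
move=> mp mq q_gt0; apply: measurable_sum => a.
by apply: measurable_funM => //; apply: measurable_funM => //; exact: measurable_funV_gt0.
Qed.

Section probability_integral.
Context {d : measure_display} {T : measurableType d} {R : realType}.
Variable P : probability T R.

Lemma bounded_measurable_integrable (f : T -> R) (B : R) :
  measurable_fun setT f -> (forall x, `|f x| <= B) -> P.-integrable setT (EFin \o f).
Proof.
move=> mf fB; apply: measurable_bounded_integrable => //.
  exact: le_lt_trans (probability_le1 P measurableT) (ltry 1).
exists B; split; first exact: num_real.
by move=> M BM x _; apply: le_trans (fB x) (ltW BM).
Qed.

Lemma integral_le_affine (f g h : T -> R) (k c : R) : measurable_fun setT f ->
  (forall x, 0 <= f x) -> P.-integrable setT (EFin \o g) -> P.-integrable setT (EFin \o h) ->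
  (forall x, f x <= 1 + k * ((g x - h x) * c)) ->
  (\int[P]_x (f x)%:E <= 1 + k%:E * ((\int[P]_x (g x)%:E - \int[P]_x (h x)%:E) * c%:E))%E.
Proof.
move=> mf f_ge0 ig ih fle.
have [G eG] : exists G : R, (\int[P]_x (g x)%:E = G%:E)%E.
  by exists (fine (\int[P]_x (g x)%:E)%E); rewrite fineK // integrable_fin_num.
have [H eH] : exists H : R, (\int[P]_x (h x)%:E = H%:E)%E.
  by exists (fine (\int[P]_x (h x)%:E)%E); rewrite fineK // integrable_fin_num.
have ikc u : P.-integrable setT (EFin \o u) ->
    P.-integrable setT (fun x => ((k * c)%:E * (u x)%:E)%E).
  exact: integrableZl.
have int_rhs : (\int[P]_x (1 + k * ((g x - h x) * c))%:E = (1 + k * ((G - H) * c))%:E)%E.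
  transitivity (\int[P]_x (1%:E + ((k * c)%:E * (g x)%:E - (k * c)%:E * (h x)%:E)))%E.
    apply: eq_integral => x _.
    by rewrite -!EFinM -EFinB -EFinD -mulrBr [(g x - h x) * c]mulrC mulrA.
  have i1 : P.-integrable setT (fun=> 1%E) by exact: finite_measure_integrable_cst.
  rewrite integralD //; last by apply: integrableB => //; exact: ikc.
  rewrite integralB ?ikc // (integralZl measurableT ig) (integralZl measurableT ih).
  rewrite eG eH integral_cst //.
  have P1 : (P : {measure set T -> \bar R}) setT = 1%E := probability_setT P.
  by rewrite P1 mul1e -!EFinM -EFinB -EFinD -mulrBr [(G - H) * c]mulrC mulrA.
apply: (@le_trans _ _ (\int[P]_x (1 + k * ((g x - h x) * c))%:E)%E).
  apply: ge0_le_integral => //.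
  - by move=> x _; rewrite lee_fin.
  - exact/measurable_EFinP.
  - apply/measurable_EFinP; apply: measurable_funD => //.
    apply: measurable_funM => //; apply: measurable_funM => //.
    apply: measurable_funB; apply/measurable_EFinP.
    + exact: measurable_int ig.
    + exact: measurable_int ih.
  - by move=> x _; rewrite lee_fin.
by rewrite int_rhs eG eH -EFinB -!EFinM -EFinD.
Qed.
End probability_integral.

Theorem lemmaE4 (R : realType) (d : measure_display) (S : measurableType d)
  (A : finType) (rho : probability S R) (piref : S -> A -> R)
  (beta Rb : R) (rstar : S -> A -> R) (pi : S -> A -> R) :
  is_policy piref ->
  (forall s a, (0 < piref s a)%R) ->
  (0 < beta)%R -> (0 < Rb)%R ->
  (forall s a, (0 <= rstar s a <= Rb)%R) ->
  (forall a, measurable_fun setT (fun s => piref s a)) ->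
  (forall a, measurable_fun setT (fun s => rstar s a)) ->
  (forall a, measurable_fun setT (fun s => pi s a)) ->
  Pi_le piref Rb beta pi ->
  (Cov rho (pistar piref rstar beta) pi <=
     1 + (kappa (expR (2 * Rb / beta)))%:E *
         ((Jbeta rho piref rstar beta (pistar piref rstar beta)
           - Jbeta rho piref rstar beta pi) * (beta^-1)%:E))%E.
Proof.
move=> piref_policy piref_gt0 beta_gt0 Rb_gt0 r_bound mref mr mpi [pi_policy pi_ratio].
have sum_ref s : \sum_a piref s a = 1 by case: (piref_policy s).
have sum_pi s : \sum_a pi s a = 1 by case: (pi_policy s).
have r_ge0 s a : 0 <= rstar s a by case/andP: (r_bound s a).
have r_le s a : rstar s a <= Rb by case/andP: (r_bound s a).
have pi_gt0 s a : 0 < pi s a by case: (pi_ratio s a).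
have ln_ratio s a : `|ln (pi s a / piref s a)| <= Rb / beta by case: (pi_ratio s a).
have mp := measurable_gibbs piref_gt0 mref mr sum_ref r_ge0 beta_gt0.
(* [pistar piref rstar beta s] is convertible to [gibbs (piref s) (rstar s) beta]. *)
apply: (@integral_le_affine _ _ _ rho
  (fun s => coverage (gibbs (piref s) (rstar s) beta) (pi s))
  (fun s => reg_reward (piref s) (rstar s) beta (gibbs (piref s) (rstar s) beta))
  (fun s => reg_reward (piref s) (rstar s) beta (pi s))).
- exact: measurable_coverage.
- move=> s; apply: sumr_ge0 => a _.
  have p_gt0 := gibbs_gt0 (piref_gt0 s) (sum_ref s) (r_ge0 s) beta_gt0 a.
  exact: mulr_ge0 (ltW p_gt0) (divr_ge0 (ltW p_gt0) (ltW (pi_gt0 s a))).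
- apply: (@bounded_measurable_integrable _ _ _ rho _ Rb).
    exact: measurable_reg_reward.
  by move=> s; apply: norm_reg_reward_gibbs_le.
- apply: (@bounded_measurable_integrable _ _ _ rho _ (Rb + Rb)).
    exact: measurable_reg_reward.
  by move=> s; apply: norm_reg_reward_le => // a; apply: ltW.
- by move=> s; apply: coverage_gibbs_le.
Qed.
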